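(* Let $H=(V,E)$ be a path hypergraph with exactly three edges $e_1,e_2,e_3$ (in path order), where the middle edge satisfies $|e_2|=2$ and $|V|\equiv 0\pmod 4$. Then $H$ is not $\mathbb{Z}_2\times\mathbb{Z}_2$-cordial.
   Context: A path hypergraph with edges $e_1,\dots,e_m$ (in this order) is a finite hypergraph $H=(V,E)$ with $E=\{e_1,\dots,e_m\}$, each edge having at least two vertices, $V=e_1\cup\cdots\cup e_m$, $|e_i\cap e_{i+1}|=1$ for $1\le i<m$, and $e_i\cap e_j=\emptyset$ whenever $|i-j|\ge 2$. Let $A=\mathbb{Z}_2\times\mathbb{Z}_2$. For a labeling $c:V\to A$, write $v_c(a)=|c^{-1}(a)|$; $c$ is $A$-friendly if $|v_c(a)-v_c(b)|\le 1$ for all $a,b\in A$. It induces $c^*:E\to A$, $c^*(e)=\sum_{v\in e}c(v)$; write $e_{c^*}(a)=|(c^* )^{-1}(a)|$. $H$ is $A$-cordial if it admits an $A$-friendly labeling $c$ with $|e_{c^*}(a)-e_{c^*}(b)|\le 1$ for all $a,b\in A$. *)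

From HB Require Import structures.
From mathcomp Require Import all_boot all_order all_algebra.
Set Implicit Arguments. Unset Strict Implicit. Unset Printing Implicit Defensive.
Import GRing.Theory.

Definition A : zmodType := ('Z_2 * 'Z_2)%type.

(* A path hypergraph on vertex set V with edges es = [:: e_1; ...; e_m]
   (in this order). Edges are pairwise distinct (E is a set). *)
Definition path_hypergraph (V : finType) (es : seq {set V}) : Prop :=
  [/\ uniq es,
      all (fun e : {set V} => 1 < #|e|) es,
      \bigcup_(e <- es) e = [set: V],
      (forall i, i.+1 < size es ->
         #|nth set0 es i :&: nth set0 es i.+1| = 1) &
      (forall i j, i < size es -> j < size es ->
         (i.+2 <= j) || (j.+2 <= i) ->
         nth set0 es i :&: nth set0 es j = set0)].

Definition vcount (V : finType) (c : V -> A) (a : A) : nat :=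
  #|[set v | c v == a]|.

Definition induced (V : finType) (c : V -> A) (e : {set V}) : A :=
  (\sum_(v in e) c v)%R.

Definition ecount (V : finType) (es : seq {set V}) (c : V -> A) (a : A) : nat :=
  count (fun e : {set V} => induced c e == a) es.

Definition close (x y : nat) : Prop := (x <= y.+1) /\ (y <= x.+1).

Definition friendly (V : finType) (c : V -> A) : Prop :=
  forall a b : A, close (vcount c a) (vcount c b).

Definition cordial (V : finType) (es : seq {set V}) : Prop :=
  exists c : V -> A, friendly c /\
    forall a b : A, close (ecount es c a) (ecount es c b).

From mathcomp Require Import all_boot all_order all_algebra zify.
Import GRing.Theory.

Set Implicit Arguments.
Unset Strict Implicit.
Unset Printing Implicit Defensive.

(* A friendly labelling of a vertex set of size 4n uses each element of
   Z_2 x Z_2 exactly n times, so the sum of all labels is n times the sum of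
   the group, which is 0.  The middle edge {u, w} of the path e_1 e_2 e_3
   consists of the two vertices shared with e_1 and e_3, so e_1 and e_3
   partition V; hence c*(e_1) + c*(e_3) = 0, i.e. c*(e_1) = c*(e_3) in
   characteristic 2. *)

Local Open Scope ring_scope.

Lemma addxxA (x : A) : x + x = 0.
Proof.
have xx (z : 'Z_2) : z + z = 0.
  by rewrite -mulr2n -mulr_natr (pchar_Zp (ltnSn 1)) mulr0.
by case: x => a b; change ((a + a, b + b) = (0, 0) :> A); rewrite !xx.
Qed.

Lemma oppxA (x : A) : - x = x.
Proof. by apply/eqP; rewrite eq_sym -addr_eq0 addxxA. Qed.

Lemma add_eq0A (x y : A) : (x + y == 0) = (x == y).
Proof. by rewrite addr_eq0 oppxA. Qed.

Definition enumA : seq A := [:: (0, 0); (0, 1); (1, 0); (1, 1)].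

Lemma perm_enumA : perm_eq (enum A) enumA.
Proof.
have Z2_cases (a : 'Z_2) : (a == 0) || (a == 1) by case: a => [[|[|m]] ?].
apply: uniq_perm; [exact: enum_uniq | by [] |].
move=> [a b]; rewrite mem_enum !inE.
by case/orP: (Z2_cases a) => /eqP->; case/orP: (Z2_cases b) => /eqP->.
Qed.

Lemma bigA (R : Type) (idx : R) (op : Monoid.com_law idx) (F : A -> R) :
  \big[op/idx]_(a : A) F a =
  op (F (0, 0)) (op (F (0, 1)) (op (F (1, 0)) (op (F (1, 1)) idx))).
Proof. by rewrite -big_enum (perm_big _ perm_enumA) /= !big_cons big_nil. Qed.

Lemma cardA : #|A| = 4%N.
Proof. by rewrite cardE (perm_size perm_enumA). Qed.

Lemma sum_elemsA : \sum_(a : A) a = 0.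
Proof. by rewrite bigA; apply/eqP. Qed.

Section VertexLabels.

Variables (V : finType) (c : V -> A).

Lemma sum_vcount : (\sum_(a : A) vcount c a)%N = #|V|.
Proof.
rewrite -sum1_card (partition_big c predT) //=.
by apply: eq_bigr => a _; rewrite /vcount sum1_card cardsE.
Qed.

Lemma sum_labels_vcount : \sum_(v : V) c v = \sum_(a : A) a *+ vcount c a.
Proof.
rewrite (partition_big c predT) //=; apply: eq_bigr => a _.
by rewrite (eq_bigr (fun=> a)) ?sumr_const /vcount ?cardsE // => v /eqP.
Qed.

Lemma friendly_vcount_const a :
  friendly c -> (#|V| %% 4 = 0)%N -> vcount c a = vcount c (0, 0).
Proof.
move=> fr V4.
have sumV : (vcount c (0, 0)%R + vcount c (0, 1)%R + vcount c (1, 0)%R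
             + vcount c (1, 1)%R)%N = #|V|.
  by rewrite -sum_vcount bigA /= addn0 !addnA.
have := fr (0, 0) (0, 1); have := fr (0, 0) (1, 0); have := fr (0, 0) (1, 1).
have := fr (0, 1) (1, 0); have := fr (0, 1) (1, 1); have := fr (1, 0) (1, 1).
rewrite /close => *.
have [e01 e10 e11] : [/\ vcount c (0, 1) = vcount c (0, 0),
    vcount c (1, 0) = vcount c (0, 0) & vcount c (1, 1) = vcount c (0, 0)].
  by split; lia.
have := mem_enum A a; rewrite (perm_mem perm_enumA) !inE.
by case/or4P=> /eqP->.
Qed.

Lemma friendly_sum_labels :
  friendly c -> (#|V| %% 4 = 0)%N -> \sum_(v : V) c v = 0.
Proof.
move=> fr V4; rewrite sum_labels_vcount.
under eq_bigr do rewrite (friendly_vcount_const _ fr V4).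
by rewrite sumrMnl sum_elemsA mul0rn.
Qed.

Lemma induced_partition (e1 e3 : {set V}) :
  e1 :&: e3 = set0 -> e1 :|: e3 = [set: V] ->
  induced c e1 + induced c e3 = \sum_(v : V) c v.
Proof.
move=> disj cover; rewrite /induced -bigU /= -?setI_eq0 ?disj //.
by apply: eq_bigl => v; rewrite inE -in_setU cover in_setT.
Qed.

End VertexLabels.

Lemma path3_partition (V : finType) (e1 e2 e3 : {set V}) :
  path_hypergraph [:: e1; e2; e3] -> #|e2| = 2%N ->
  e1 :&: e3 = set0 /\ e1 :|: e3 = [set: V].
Proof.
case=> _ _ cover meet disj e2_2.
have e12 := meet 0%N erefl; have e23 := meet 1%N erefl.
have e13 := disj 0%N 2%N erefl erefl erefl; rewrite /= in e12 e23 e13.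
split=> //.
have e2_sub : e2 \subset e1 :|: e3.
  have disj2 : (e2 :&: e1) :&: (e2 :&: e3) = set0.
    by rewrite setIACA setIid e13 setI0.
  apply/setIidPl/eqP; rewrite eqEcard subsetIl /=.
  by rewrite setIUr cardsU disj2 cards0 subn0 setIC e12 e23 e2_2.
apply/setP=> v; rewrite -cover !big_cons big_nil setU0 !inE.
by case: (boolP (v \in e2)) => [/(subsetP e2_sub)|]; rewrite ?inE ?orbT ?orbF.
Qed.

Lemma ecount_repeated_label (V : finType) (c : V -> A) (e1 e2 e3 : {set V}) :
  induced c e1 = induced c e3 ->
  ~ forall a b : A, close (ecount [:: e1; e2; e3] c a) (ecount [:: e1; e2; e3] c b).
Proof.
move=> e13 balanced; set x := induced c e1; set y := induced c e2.
have [b _] : exists2 b, b \in [set: A] & b \notin [set x; y].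
  apply/subsetPn; apply/negP => /subset_leq_card.
  by rewrite cardsT cardA cards2; case: (x != y).
rewrite !inE negb_or => /andP [bx by_].
have [+ _] := balanced x b; rewrite /ecount /= -e13 -/x -/y eqxx.
by rewrite ![_ == b]eq_sym (negbTE bx) (negbTE by_); case: (y == x).
Qed.

Local Close Scope ring_scope.

Theorem proposition7 (V : finType) (es : seq {set V}) :
  path_hypergraph es -> size es = 3 ->
  #|nth set0 es 1| = 2 -> #|V| %% 4 = 0 ->
  ~ cordial es.
Proof.
case: es => [|e1 [|e2 [|e3 [|]]]] // path _ e2_2 V4 [c [fr balanced]].
have [disj cover] := path3_partition path e2_2.
apply: (ecount_repeated_label (c := c) _ balanced).
apply/eqP; rewrite -add_eq0A induced_partition //.
exact/eqP/friendly_sum_labels.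
Qed.
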